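(* Let $n,m$ be integers with $m\geq 1$ and $n\geq 6m+7$. Then $$ gr_{3}(K_{3} : S(n,m)) = \begin{cases} 5\cdot\frac{n}{2} +1 & \text{ if $n$ is even,}\\ 5\cdot\frac{n-1}{2} + 2 & \text{ if $n$ is odd.} \end{cases} $$
   Context: For integers $n\geq m\geq 0$, the double star $S(n,m)$ is the graph obtained from the disjoint union of the stars $K_{1,n}$ and $K_{1,m}$ by adding an edge between their centers. A $k$-coloring of a graph is an assignment of one of $k$ colors to each edge. A subgraph is rainbow if all its edges have distinct colors and monochromatic if all its edges have the same color. For graphs $G,H$ and a positive integer $k$, the Gallai–Ramsey number $gr_k(G:H)$ is the minimum integer $N$ such that every $k$-coloring of the edges of the complete graph $K_N$ contains either a rainbow copy of $G$ or a monochromatic copy of $H$. *)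

From mathcomp Require Import all_boot.
Set Implicit Arguments. Unset Strict Implicit. Unset Printing Implicit Defensive.

(* An edge k-coloring of the complete graph K_N on vertex set 'I_N is a
   symmetric function c : 'I_N -> 'I_N -> 'I_k; only values c x y with
   x != y are meaningful (the diagonal is ignored by all definitions below). *)
Definition edge_coloring (N k : nat) (c : 'I_N -> 'I_N -> 'I_k) : Prop :=
  forall x y, c x y = c y x.

Definition has_rainbow_K3 (N k : nat) (c : 'I_N -> 'I_N -> 'I_k) : Prop :=
  exists x y z : 'I_N,
    [/\ x != y, y != z, x != z &
        [/\ c x y != c y z, c x y != c x z & c y z != c x z]].

Definition has_mono_double_star (n m N k : nat) (c : 'I_N -> 'I_N -> 'I_k)
  : Prop :=
  exists (col : 'I_k) (u v : 'I_N) (A B : {set 'I_N}),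
    [/\ [/\ u != v, #|A| = n & #|B| = m],
        [/\ [disjoint A & B], u \notin A :|: B & v \notin A :|: B] &
        [/\ c u v = col,
            (forall a, a \in A -> c u a = col) &
            (forall b, b \in B -> c v b = col)]].

Definition gr_property (k n m N : nat) : Prop :=
  forall c : 'I_N -> 'I_N -> 'I_k, edge_coloring c ->
    has_rainbow_K3 c \/ has_mono_double_star n m c.

Definition is_gr_K3_double_star (k n m g : nat) : Prop :=
  gr_property k n m g /\ (forall N, gr_property k n m N -> g <= N).

From mathcomp Require Import all_boot zify.
From Stdlib Require Import Classical.
Set Implicit Arguments. Unset Strict Implicit. Unset Printing Implicit Defensive.

(* Upper bound.  Let [c] be a 3-colouring of [K_N] with no rainbow triangle
   and no monochromatic [S(n,m)].  By Gallai's theorem some colour [g] has a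
   disconnected graph, and a vertex outside a [g]-component sees the whole
   component in a single colour.  If some [g]-component has at most [m]
   vertices, one of the two other colours gives a vertex with more than
   [n + m] neighbours of that colour outside its component, and degree
   counting around them yields a double star.  Otherwise each vertex has at
   most [n] neighbours of each other colour outside its component, so every
   [g]-component has at least [N - 2n] vertices while two of them together
   have at most [n], which is impossible at the given value of [N].
   Lower bound: blow up the 2-colouring of [K_5] by two pentagons into blocks
   of [n/2] vertices, coloured inside with the third colour; it has no rainbow
   triangle and every monochromatic degree is at most [n]. *)

(* A binder [A : {set 'I_N}] elaborates with a [reverse_coercion] wrapper
   that [lia] treats as an atom different from the bare [#|A|]. *)
Ltac card_lia := unfold reverse_coercion in *; lia.

Lemma exists_subset_card (T : finType) (X : {set T}) k :
  k <= #|X| -> exists2 Y : {set T}, Y \subset X & #|Y| = k.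
Proof.
elim: k => [|k IH] hk; first by exists set0; rewrite ?sub0set ?cards0.
have [Y sYX cY] := IH (ltnW hk).
have /card_gt0P[x /setDP[xX xY]] : 0 < #|X :\: Y|.
  by rewrite cardsDS // cY subn_gt0.
exists (x |: Y); first by rewrite subUset sub1set xX sYX.
by rewrite cardsU1 xY cY.
Qed.

Lemma cardsU_disjoint (T : finType) (A B : {set T}) :
  [disjoint A & B] -> #|A :|: B| = #|A| + #|B|.
Proof. by move=> dAB; apply/eqP; rewrite (leq_card_setU A B). Qed.

Definition distinct3 (a b d : 'I_3) := [&& a != b, a != d & b != d].

Lemma distinct3_cover a b d y : distinct3 a b d -> [|| y == a, y == b | y == d].
Proof.
by case: a => [[|[|[|?]]] ?] //; case: b => [[|[|[|?]]] ?] //;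
   case: d => [[|[|[|?]]] ?] //; case: y => [[|[|[|?]]] ?].
Qed.

Lemma distinct3_others d : exists a b, distinct3 a b d.
Proof.
case: d => [[|[|[|?]]] ?] //.
- by exists (inord 1), (inord 2); rewrite /distinct3 -!val_eqE /= !inordK.
- by exists (inord 0), (inord 2); rewrite /distinct3 -!val_eqE /= !inordK.
- by exists (inord 0), (inord 1); rewrite /distinct3 -!val_eqE /= !inordK.
Qed.

Lemma card_fibres3 (T : finType) (A : {set T}) (f : T -> 'I_3) a b d :
  distinct3 a b d ->
  #|[set z in A | f z == a]| + #|[set z in A | f z == b]| + #|[set z in A | f z == d]| = #|A|.
Proof.
move=> abd.
have cover : [set z in A | f z == a] :|: [set z in A | f z == b] :|: [set z in A | f z == d] = A.
  apply/setP => z; rewrite !inE -!andb_orr -orbA.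
  by case: (z \in A); rewrite ?distinct3_cover.
case/and3P: abd => ab ad bd.
rewrite -!cardsU_disjoint ?cover // -setI_eq0; apply/eqP/setP => z; rewrite !inE.
  case: (z \in A) => //=; case: (f z =P d) => [-> | _]; last by rewrite andbF.
  by rewrite !(eq_sym d) (negbTE ad) (negbTE bd).
case: (z \in A) => //=; case: (f z =P b) => [-> | _]; last by rewrite andbF.
by rewrite eq_sym (negbTE ab).
Qed.

Section MonoComponents.
Variables (N k : nat) (c : 'I_N -> 'I_N -> 'I_k).
Hypothesis c_sym : edge_coloring c.
Implicit Types (S X : {set 'I_N}) (g : 'I_k) (u v w z a b : 'I_N).

Definition mono_edge S g := [rel a b | [&& a \in S, b \in S, a != b & c a b == g]].
Definition mono_comp S g u := [set z | connect (mono_edge S g) u z].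

Lemma mono_edge_sym S g : connect_sym (mono_edge S g).
Proof.
apply: sym_connect_sym => a b /=.
by rewrite c_sym eq_sym; do 2!case: (_ \in S).
Qed.

Lemma mono_comp_refl S g u : u \in mono_comp S g u.
Proof. by rewrite inE. Qed.

Lemma mono_comp_sym S g u z : z \in mono_comp S g u -> u \in mono_comp S g z.
Proof. by rewrite !inE mono_edge_sym. Qed.

Lemma mono_comp_notin_sym S g u z :
  z \notin mono_comp S g u -> u \notin mono_comp S g z.
Proof. by apply: contra; apply: mono_comp_sym. Qed.

Lemma mono_comp_trans S g u v z :
  v \in mono_comp S g u -> z \in mono_comp S g v -> z \in mono_comp S g u.
Proof. by rewrite !inE; apply: connect_trans. Qed.

Lemma mono_comp_eq S g u z : z \in mono_comp S g u -> mono_comp S g z = mono_comp S g u.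
Proof.
move=> zu; apply/setP => w; apply/idP/idP; first exact: mono_comp_trans.
exact: mono_comp_trans (mono_comp_sym zu).
Qed.

Lemma mono_comp_disjoint S g u v z :
  v \notin mono_comp S g u -> z \in mono_comp S g v -> z \notin mono_comp S g u.
Proof.
move=> vu zv; apply: contra vu => zu.
by rewrite -(mono_comp_eq zu) (mono_comp_eq zv) mono_comp_refl.
Qed.

Lemma mono_comp_closed S X g u :
  u \in X -> (forall a b, a \in X -> b \in S -> a != b -> c a b = g -> b \in X) ->
  mono_comp S g u \subset X.
Proof.
move=> uX closedX; apply/subsetP => z; rewrite inE; apply: contraTT => zX.
have clX : closed (mono_edge S g) X.
  apply: (intro_closed (mono_edge_sym S g)) => a b /and4P[_ bS ab /eqP cab] aX.
  exact: closedX cab.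
by apply/negP => /(closed_connect clX); rewrite uX (negbTE zX).
Qed.

Lemma mono_comp_sub S g u : u \in S -> mono_comp S g u \subset S.
Proof. by move=> uS; apply: mono_comp_closed. Qed.

Lemma mono_comp_edge S g a b :
  a \in S -> b \in S -> a != b -> c a b = g -> b \in mono_comp S g a.
Proof. by move=> aS bS ab cab; rewrite inE connect1 //= aS bS ab cab eqxx. Qed.

Lemma mono_comp_cross S g a b : a \in S -> b \in S ->
  b \notin mono_comp S g a -> (a != b) && (c a b != g).
Proof.
move=> aS bS ba; have ab : a != b by apply: contraNneq ba => <-; apply: mono_comp_refl.
by rewrite ab; apply: contraNneq ba; apply: mono_comp_edge.
Qed.

Lemma dvdn_card_mono_comps S g l X :
  (forall z, z \in X -> mono_comp S g z \subset X) ->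
  (forall z, z \in X -> #|mono_comp S g z| = l) -> l %| #|X|.
Proof.
have [r] := ubnP #|X|; elim: r X => // r IH X ltXr closedX sizeX.
have [->|[z zX]] := set_0Vmem X; first by rewrite cards0 dvdn0.
have czX := closedX z zX.
have l_gt0 : 0 < l by rewrite -(sizeX z zX); apply/card_gt0P; exists z; apply: mono_comp_refl.
have -> : #|X| = #|X :\: mono_comp S g z| + l.
  by rewrite cardsDS // -(sizeX z zX) subnK ?subset_leq_card.
apply: dvdn_add (dvdnn l); apply: IH.
- have := subset_leq_card czX.
  by rewrite cardsDS // (sizeX z zX); lia.
- move=> w /setDP[wX wz]; apply/subsetP => q qw.
  by rewrite inE (subsetP (closedX w wX)) ?(mono_comp_disjoint wz qw).
- by move=> w /setDP[wX _]; apply: sizeX.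
Qed.

Definition mono_disconnected S g :=
  exists a b, [/\ a \in S, b \in S & b \notin mono_comp S g a].

Lemma mono_disconnected_outside S g y : mono_disconnected S g -> y \in S ->
  exists2 z, z \in S & z \notin mono_comp S g y.
Proof.
case=> a [b [aS bS ba]] yS.
have [ay|] := boolP (a \in mono_comp S g y); last by exists a.
by exists b => //; apply: contra ba; apply: mono_comp_trans (mono_comp_sym ay).
Qed.

Lemma isolated_mono_disconnected S g x y : x \in S -> y \in S -> y != x ->
  (forall z, z \in S -> z != x -> c x z != g) -> mono_disconnected S g.
Proof.
move=> xS yS yx xg; exists x, y; split => //.
have /subsetP/(_ y) : mono_comp S g x \subset [set x].
  apply: mono_comp_closed; first by rewrite inE.
  move=> a b; rewrite inE => /eqP-> bS xb cxb.
  by move: (xg b bS); rewrite eq_sym xb cxb eqxx => /(_ isT).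
by rewrite inE (negbTE yx) => yF; apply/negP => /yF.
Qed.

Section NoRainbow.
Hypothesis no_rainbow : ~ has_rainbow_K3 c.

Lemma triangle_two_colors x y z : x != y -> y != z -> x != z ->
  [|| c x y == c y z, c x y == c x z | c y z == c x z].
Proof.
move=> xy yz xz; apply/negPn/negP => /norP[h1 /norP[h2 h3]].
by apply: no_rainbow; exists x, y, z.
Qed.

Lemma color_to_mono_comp S g u z q : u \in S -> z \in S ->
  z \notin mono_comp S g u -> q \in mono_comp S g u -> c z q = c z u.
Proof.
move=> uS zS zu qu.
pose X := [set w in mono_comp S g u | c z w == c z u].
suff /subsetP/(_ q qu) : mono_comp S g u \subset X by rewrite inE => /andP[_ /eqP].
apply: mono_comp_closed; first by rewrite !inE connect0 eqxx.
move=> a b /setIdP[au /eqP cza_u] bS ab cab.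
have aS := subsetP (mono_comp_sub g uS) a au.
have bu := mono_comp_trans au (mono_comp_edge aS bS ab cab).
have uz := mono_comp_notin_sym zu.
have /andP[za cza] := mono_comp_cross zS aS (mono_comp_disjoint uz au).
have /andP[zb czb] := mono_comp_cross zS bS (mono_comp_disjoint uz bu).
rewrite inE bu -cza_u /=.
case/or3P: (triangle_two_colors za ab zb) => /eqP h.
- by rewrite h cab eqxx in cza.
- by rewrite h.
- by rewrite -h cab eqxx in czb.
Qed.
End NoRainbow.
End MonoComponents.

Section GallaiTheorem.
Variables (N : nat) (c : 'I_N -> 'I_N -> 'I_3).
Hypothesis c_sym : edge_coloring c.
Hypothesis no_rainbow : ~ has_rainbow_K3 c.
Implicit Types (S : {set 'I_N}) (g h : 'I_3) (x y z a : 'I_N).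
Local Notation comp := (mono_comp c).

Section Step.
Variables (S : {set 'I_N}) (g : 'I_3) (x : 'I_N).
Hypothesis xS : x \notin S.
Hypothesis S_disconnected : mono_disconnected c S g.
Hypothesis x_reaches : forall y, y \in S -> exists2 a, a \in comp S g y & c x a = g.

Lemma color_across_comps y a : y \in S -> a \in S -> a \notin comp S g y ->
  c x a = g -> c x y != g -> c y a = c x y.
Proof.
move=> yS aS ay cxa cxy.
have xy : x != y by apply: contraNneq xS => ->.
have xa : x != a by apply: contraNneq xS => ->.
have /andP[ya cya] := mono_comp_cross yS aS ay.
case/or3P: (triangle_two_colors no_rainbow xy ya xa) => /eqP e //.
- by rewrite e cxa eqxx in cxy.
- by rewrite e cxa eqxx in cya.
Qed.

Lemma at_most_one_other_color y y' : y \in S -> y' \in S ->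
  c x y != g -> c x y' != g -> c x y = c x y'.
Proof.
move=> yS y'S cxy cxy'.
(* Route both colours through vertices [a] with [c x a = g] in other
   [g]-components: the triangle [x y a] forces [c y a = c x y], and [a] sees
   each [g]-component in one colour. *)
have reach z : z \in S -> exists a, [/\ a \in S, a \in comp S g z & c x a = g].
  move=> zS; have [a az cxa] := x_reaches zS.
  by exists a; rewrite (subsetP (mono_comp_sub c_sym g zS)).
have [y'y|y'y] := boolP (y' \in comp S g y).
  have [z zS zy] := mono_disconnected_outside c_sym S_disconnected yS.
  have [a [aS az cxa]] := reach z zS.
  have ay := mono_comp_disjoint c_sym zy az.
  have ay' : a \notin comp S g y' by rewrite (mono_comp_eq c_sym y'y).
  rewrite -(color_across_comps yS aS ay cxa cxy) -(color_across_comps y'S aS ay' cxa cxy').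
  by rewrite c_sym -(color_to_mono_comp c_sym no_rainbow yS aS ay y'y) c_sym.
have yy' := mono_comp_notin_sym c_sym y'y.
have [a [aS ay cxa]] := reach y yS.
have [a' [a'S ay' cxa']] := reach y' y'S.
rewrite -(color_across_comps yS a'S (mono_comp_disjoint c_sym y'y ay') cxa' cxy).
rewrite -(color_across_comps y'S aS (mono_comp_disjoint c_sym yy' ay) cxa cxy').
rewrite (color_to_mono_comp c_sym no_rainbow y'S yS yy' ay').
by rewrite (color_to_mono_comp c_sym no_rainbow yS y'S y'y ay) c_sym.
Qed.

End Step.

(* Either some [g]-component of [S] has no [g]-edge to [x] and stays a
   component, or [x] sends at most one colour besides [g] into [S] and the
   third colour isolates [x]. *)
Lemma gallai_step S g x : x \notin S -> mono_disconnected c S g ->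
  exists h, mono_disconnected c (x |: S) h.
Proof.
move=> xS discS.
case: (boolP [exists y in S, [forall a in comp S g y, c x a != g]]).
  case/exists_inP => y yS /forall_inP yg.
  exists g, y, x; split; rewrite ?in_setU1 ?eqxx ?yS ?orbT //.
  suff sub : comp (x |: S) g y \subset comp S g y.
    have /subsetP subS := subset_trans sub (mono_comp_sub c_sym g yS).
    by apply: contraNN xS; apply: subS.
  apply: (mono_comp_closed c_sym); first exact: mono_comp_refl.
  move=> a b ay /setU1P[-> | bS] ab cab.
    by move: (yg a ay); rewrite c_sym cab eqxx.
  have aS := subsetP (mono_comp_sub c_sym g yS) a ay.
  exact: mono_comp_trans ay (mono_comp_edge aS bS ab cab).
rewrite negb_exists_in => /forall_inP x_reaches.
have {}x_reaches y : y \in S -> exists2 a, a \in comp S g y & c x a = g.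
  move=> yS; have := x_reaches y yS; rewrite negb_forall_in.
  by case/exists_inP => a ay /negPn/eqP; exists a.
have [h1 [h2 /and3P[/eqP h12 h1g h2g]]] := distinct3_others g.
have [a0 [b0 [a0S _ _]]] := discS.
have [h xh] : exists h, forall z, z \in S -> c x z != h.
  case: (boolP [exists y in S, c x y == h1]) => [/exists_inP[y yS /eqP cxy] | no_h1].
    exists h2 => z zS; apply/eqP => cxz; apply: h12.
    by rewrite -cxy -cxz (at_most_one_other_color xS discS x_reaches yS zS) ?cxy ?cxz.
  exists h1 => z zS; apply/eqP => cxz; case/negP: no_h1.
  by apply/exists_inP; exists z; rewrite ?cxz.
exists h; apply: (isolated_mono_disconnected c_sym (x := x) (y := a0)).
- exact: setU11.
- by rewrite in_setU1 a0S orbT.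
- by apply: contraNneq xS => <-.
- by move=> z /setU1P[-> /eqP // | zS _]; apply: xh.
Qed.

Theorem gallai_mono_disconnected S : 1 < #|S| -> exists g, mono_disconnected c S g.
Proof.
have [r] := ubnP #|S|; elim: r S => // r IH S ltSr S_gt1.
have [x xS] : exists x, x \in S by apply/set0Pn; rewrite -card_gt0 ltnW.
have defS : S = x |: S :\ x by rewrite setD1K.
have cardS : #|S| = #|S :\ x|.+1 by rewrite (cardsD1 x) xS.
have [S'_gt1 | S'_le1] := ltnP 1 #|S :\ x|.
  have [|g discS'] := IH (S :\ x) _ S'_gt1; first by rewrite -ltnS -cardS.
  by rewrite defS; apply: gallai_step discS'; rewrite !inE eqxx.
have [y /setD1P[yx yS]] : exists y, y \in S :\ x.
  by apply/set0Pn; rewrite -card_gt0 -ltnS -cardS.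
have [h1 [h2 /and3P[_ h1g _]]] := distinct3_others (c x y).
exists h1; apply: (isolated_mono_disconnected c_sym xS yS yx) => z zS zx.
suff -> : z = y by rewrite eq_sym.
apply/eqP; apply: contraLR S'_le1 => zy.
by rewrite -ltnNge (cardsD1 y) !inE yx yS (cardsD1 z) !inE zy zx zS.
Qed.

End GallaiTheorem.

Section DoubleStars.
Variables (n m N k : nat) (c : 'I_N -> 'I_N -> 'I_k).
Implicit Types (col : 'I_k) (u v : 'I_N).

Definition nbhd col u := [set z in [set~ u] | c u z == col].
Definition deg col u := #|nbhd col u|.

Lemma in_nbhd col u z : (z \in nbhd col u) = (z != u) && (c u z == col).
Proof. by rewrite !inE. Qed.

Lemma double_star_of_sets u v col (P Q : {set 'I_N}) :
  u != v -> c u v = col -> P \subset nbhd col u -> Q \subset nbhd col v ->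
  u \notin Q -> v \notin P -> m <= #|Q| -> n <= #|P :\: Q| ->
  has_mono_double_star n m c.
Proof.
move=> uv cuv /subsetP sP /subsetP sQ uQ vP mQ nP.
have [B /subsetP sB cB] := exists_subset_card mQ.
have [A /subsetP sA cA] := exists_subset_card nP.
have AP a : a \in A -> [/\ a \in P, a \notin Q, a != u & c u a = col].
  by move=> /sA /setDP[aP aQ]; move: (sP a aP); rewrite !inE => /andP[au /eqP].
have BQ b : b \in B -> [/\ b \in Q, b != v & c v b = col].
  by move=> /sB bQ; move: (sQ b bQ); rewrite !inE => /andP[bv /eqP].
exists col, u, v, A, B; split; split => //.
- rewrite -setI_eq0; apply/set0Pn => -[z /setIP[/AP[_ zQ _ _] /sB zQ']].
  by rewrite zQ' in zQ.
- rewrite in_setU negb_or; apply/andP; split; last by apply: contra uQ => /sB.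
  by apply/negP => /AP[_ _ /eqP].
- rewrite in_setU negb_or; apply/andP; split; first by apply: contra vP => /AP[].
  by apply/negP => /BQ[_ /eqP].
- by move=> a /AP[].
- by move=> b /BQ[].
Qed.

Lemma deg_of_double_star : has_mono_double_star n m c -> exists col u, n < deg col u.
Proof.
case=> col [u [v [A [B [[uv cA _] [_ uAB vAB] [cuv cuA _]]]]]].
have vA : v \notin A by apply: contra vAB; rewrite in_setU => ->.
have sub : v |: A \subset nbhd col u.
  apply/subsetP => z /setU1P[-> | zA]; first by rewrite in_nbhd eq_sym uv cuv eqxx.
  rewrite in_nbhd cuA // eqxx andbT; apply: contraNneq uAB => <-.
  by rewrite in_setU zA.
by exists col, u; apply: leq_trans (subset_leq_card sub); rewrite cardsU1 vA cA.
Qed.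

Hypothesis c_sym : edge_coloring c.

Lemma double_star_of_degrees u v col : u != v -> c u v = col ->
  n + m < deg col u -> m < deg col v -> has_mono_double_star n m c.
Proof.
move=> uv cuv du dv.
have unb : u \in nbhd col v by rewrite !inE uv c_sym cuv eqxx.
have vnb : v \in nbhd col u by rewrite !inE eq_sym uv cuv eqxx.
have [|Q sQ cQ] := @exists_subset_card _ (nbhd col v :\ u) m.
  by move: dv; rewrite /deg (cardsD1 u) unb.
apply: (double_star_of_sets (P := nbhd col u :\ v) uv cuv (subsetDl _ _))
  (subset_trans sQ (subsetDl _ _)) _ _ _ _.
- by apply/negP => /(subsetP sQ); rewrite setD11.
- by rewrite setD11.
- by rewrite cQ.
- rewrite /deg (cardsD1 v) vnb add1n in du; rewrite cardsD.
  have := subset_leq_card (subsetIr (nbhd col u :\ v) Q). card_lia.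
Qed.

End DoubleStars.

Section UpperBound.
Variables (n m N : nat) (c : 'I_N -> 'I_N -> 'I_3).
Hypothesis c_sym : edge_coloring c.
Hypothesis no_rainbow : ~ has_rainbow_K3 c.
Hypothesis no_star : ~ has_mono_double_star n m c.
Implicit Types (g x col : 'I_3) (u v w z o q : 'I_N).

Local Notation comp g u := (mono_comp c setT g u).
Local Notation nbhd := (nbhd c).
Local Notation deg := (deg c).

Definition outer_nbhd g col u := [set z in ~: comp g u | c u z == col].

Lemma in_outer_nbhd g col u z :
  (z \in outer_nbhd g col u) = (z \notin comp g u) && (c u z == col).
Proof. by rewrite inE in_setC. Qed.

Lemma comp_cross g u z : z \notin comp g u -> (u != z) && (c u z != g).
Proof. exact: mono_comp_cross (in_setT u) (in_setT z). Qed.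

Lemma comp_edge g u z : u != z -> c u z = g -> z \in comp g u.
Proof. exact: mono_comp_edge (in_setT u) (in_setT z). Qed.

Lemma color_to_comp g u z q : z \notin comp g u -> q \in comp g u -> c z q = c z u.
Proof. exact: (color_to_mono_comp c_sym no_rainbow (in_setT u) (in_setT z)). Qed.

Lemma deg_adj_le u v col : u != v -> c u v = col -> m < deg col v -> deg col u <= n + m.
Proof.
move=> uv cuv dv; rewrite leqNgt; apply/negP => du.
exact: no_star (double_star_of_degrees c_sym uv cuv du dv).
Qed.

Lemma deg_partition g x x' u : distinct3 x x' g -> deg x u + deg x' u + deg g u = N.-1.
Proof. by move=> dg; rewrite card_fibres3 // cardsC1 card_ord. Qed.

Lemma outer_nbhd_partition g x x' u : distinct3 x x' g ->
  #|outer_nbhd g x u| + #|outer_nbhd g x' u| + #|comp g u| = N.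
Proof.
move=> dg; have no_g : [set z in ~: comp g u | c u z == g] = set0.
  apply/setP => z; rewrite inE in_setC in_set0.
  by case: (boolP (z \in comp g u)) => //= /comp_cross /andP[_ /negbTE].
have := card_fibres3 (~: comp g u) (c u) dg; rewrite no_g cards0 addn0 => ->.
by rewrite addnC cardsC card_ord.
Qed.

Lemma outer_nbhd_sub g col u : outer_nbhd g col u \subset nbhd col u.
Proof.
apply/subsetP => z; rewrite in_outer_nbhd => /andP[zu czu]; rewrite !inE czu andbT.
by apply: contraNneq zu => ->; apply: mono_comp_refl.
Qed.

Lemma outer_nbhd_comp_eq g col u u' : u' \in comp g u -> outer_nbhd g col u' = outer_nbhd g col u.
Proof.
move=> u'u; apply/setP => z; rewrite !in_outer_nbhd (mono_comp_eq c_sym u'u).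
by case: (boolP (z \in comp g u)) => //= zu; rewrite c_sym (color_to_comp zu u'u) c_sym.
Qed.

Lemma outer_nbhd_le_n g col u : m < #|comp g u| -> #|outer_nbhd g col u| <= n.
Proof.
move=> big; rewrite leqNgt; apply/negP => large.
have [v vout] : exists v, v \in outer_nbhd g col u by apply/set0Pn; rewrite -card_gt0; card_lia.
move: (vout); rewrite in_outer_nbhd => /andP[vu /eqP cuv].
have uv : u != v by apply: contraNneq vu => <-; apply: mono_comp_refl.
apply: no_star (double_star_of_sets (P := outer_nbhd g col u :\ v) (Q := comp g u :\ u)
  uv cuv _ _ _ _ _ _).
- exact: subset_trans (subsetDl _ _) (outer_nbhd_sub g col u).
- apply/subsetP => q /setD1P[qu qc].
  rewrite !inE (color_to_comp vu qc) c_sym cuv eqxx andbT.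
  by apply: contraNneq vu => <-.
- by rewrite setD11.
- by rewrite setD11.
- by move: big; rewrite (cardsD1 u) mono_comp_refl; card_lia.
- have -> : (outer_nbhd g col u :\ v) :\: (comp g u :\ u) = outer_nbhd g col u :\ v.
    apply/setDidPl; rewrite -setI_eq0; apply/eqP/setP => z.
    by rewrite !in_setI !in_setD1 in_outer_nbhd in_set0; case: (z \in comp g u); rewrite ?andbF.
  by move: large; rewrite (cardsD1 v) vout; card_lia.
Qed.


Lemma card_le_of_high_deg g x x' (G : {set 'I_N}) w0 : distinct3 x x' g ->
  (forall w, w \in G -> n + m < deg x' w) -> w0 \in G ->
  #|G| <= (deg x w0 + deg g w0).+1.
Proof.
move=> dg highG w0G.
have sub : G :\ w0 \subset nbhd x w0 :|: nbhd g w0.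
  apply/subsetP => w /setD1P[ww0 wG]; rewrite in_setU !in_nbhd ww0 /=.
  case/or3P: (distinct3_cover (c w0 w) dg) => /eqP cw; rewrite cw ?eqxx ?orbT //.
  have w0w : w0 != w by rewrite eq_sym.
  have := deg_adj_le w0w cw; have := highG w wG; have := highG w0 w0G; lia.
have := subset_leq_card sub; rewrite (cardsD1 w0 G) w0G cardsU /deg; card_lia.
Qed.

Section LargeOrder.
Hypothesis n_large : 6 * m + 7 <= n.
Hypothesis N_large : 5 * n <= 2 * N + 1.

Section SmallComponent.
Variables (g x x' : 'I_3) (y : 'I_N).
Hypothesis dg : distinct3 x x' g.
Local Notation W := (outer_nbhd g x y).
Hypothesis outer_large : n + m < #|W|.

Lemma deg_small_in_outer z : z \in W -> deg x z <= m.
Proof.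
move=> zW; move: (zW); rewrite in_outer_nbhd => /andP[zy /eqP cyz].
have yz : y != z by apply: contraNneq zy => <-; apply: mono_comp_refl.
rewrite leqNgt; apply/negP => dz.
have := deg_adj_le yz cyz dz; have := subset_leq_card (outer_nbhd_sub g x y).
rewrite /deg; card_lia.
Qed.

Lemma outer_closed_under_comp z w : z \in W -> w \in comp g z -> w \in W.
Proof.
rewrite !in_outer_nbhd => /andP[zy /eqP cyz] wz.
rewrite (mono_comp_disjoint c_sym zy wz) /=.
by rewrite (color_to_comp (mono_comp_notin_sym c_sym zy) wz) cyz.
Qed.

Lemma deg_other_large_in_outer z : z \in W -> m < deg x' z.
Proof.
move=> zW; rewrite ltnNge; apply/negP => dz.
(* Otherwise [z] has more than [n + m] [g]-neighbours, all in [W] and of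
   [g]-degree at most [m], hence of [x']-degree above [n + m]; but
   [card_le_of_high_deg] allows at most [2 m + 1] such vertices. *)
have := deg_partition z dg; have := deg_small_in_outer zW => dxz part.
have dgz : n + m < deg g z by lia.
have GW w : w \in nbhd g z -> w \in W.
  rewrite in_nbhd => /andP[wz /eqP czw].
  by apply: outer_closed_under_comp zW (comp_edge _ czw); rewrite eq_sym.
have Gg w : w \in nbhd g z -> deg g w <= m.
  rewrite in_nbhd => /andP[wz /eqP czw]; rewrite leqNgt; apply/negP => dgw.
  by have := deg_adj_le (u := z) _ czw dgw; rewrite eq_sym wz; lia.
have Gx' w : w \in nbhd g z -> n + m < deg x' w.
  move=> wG; have := deg_partition w dg; have := deg_small_in_outer (GW w wG); have := Gg w wG; lia.
have /card_gt0P[w0 w0G] : 0 < deg g z by lia.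
have := card_le_of_high_deg dg Gx' w0G; have := deg_small_in_outer (GW w0 w0G); have := Gg w0 w0G.
rewrite /deg in dgz *; card_lia.
Qed.

Section Vertex.
Variable z : 'I_N.
Hypothesis zW : z \in W.

Lemma outer_nbhd_small_in_outer : #|outer_nbhd g x z| <= m.
Proof. exact: leq_trans (subset_leq_card (outer_nbhd_sub g x z)) (deg_small_in_outer zW). Qed.

Lemma comp_large_in_outer : m < #|comp g z|.
Proof.
rewrite ltnNge; apply/negP => small.
move: (zW); rewrite in_outer_nbhd => /andP[zy /eqP cyz].
have sub : outer_nbhd g x' z \subset ~: (W :|: comp g y).
  apply/subsetP => o; rewrite in_outer_nbhd => /andP[oz /eqP czo].
  have zo : z != o by apply: contraNneq oz => <-; apply: mono_comp_refl.
  rewrite in_setC in_setU negb_or; apply/andP; split; apply/negP.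
    move=> oW; have := deg_adj_le zo czo (deg_other_large_in_outer oW).
    have := subset_leq_card (outer_nbhd_sub g x' z); have := outer_nbhd_partition z dg.
    have := outer_nbhd_small_in_outer; rewrite /deg; card_lia.
  move=> oy; have := color_to_comp zy oy; rewrite czo c_sym cyz => xx'.
  by case/and3P: dg; rewrite xx' eqxx.
have disjWy : [disjoint W & comp g y].
  rewrite -setI_eq0; apply/eqP/setP => o; rewrite in_setI in_outer_nbhd in_set0.
  by case: (o \in comp g y); rewrite ?andbF.
have := subset_leq_card sub; have := cardsC (W :|: comp g y).
rewrite cardsU_disjoint // card_ord.
have := outer_nbhd_partition z dg; have := outer_nbhd_small_in_outer.
have : 0 < #|comp g y| by apply/card_gt0P; exists y; apply: mono_comp_refl.
card_lia.
Qed.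

Lemma outer_nbhd_other_empty : outer_nbhd g x' z = set0.
Proof.
apply/setP => o; rewrite in_set0; apply/negP; rewrite in_outer_nbhd => /andP[oz /eqP czo].
have oz' : o != z by apply: contraNneq oz => ->; apply: mono_comp_refl.
have coz : c o z = x' by rewrite c_sym.
have sub : comp g z \subset nbhd x' o.
  apply/subsetP => q qz; rewrite in_nbhd (color_to_comp oz qz) coz eqxx andbT.
  by apply: contraNneq oz => <-.
have := deg_adj_le oz' coz (deg_other_large_in_outer zW); have := subset_leq_card sub.
have := outer_nbhd_le_n x' comp_large_in_outer; have := outer_nbhd_partition z dg.
have := outer_nbhd_small_in_outer; rewrite /deg; card_lia.
Qed.

Lemma deg_g_large_in_comp w : w \in comp g z -> n + m < deg g w.
Proof.
move=> wz; have wW := outer_closed_under_comp zW wz.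
have dx'w : deg x' w <= n + m.
  rewrite leqNgt; apply/negP => big.
  have /card_gt0P[o] : 0 < deg x' w by lia.
  rewrite in_nbhd => /andP[ow /eqP cwo].
  have ow' : o \in comp g w.
    apply: contraT => ow'; suff : o \in outer_nbhd g x' w.
      by rewrite (outer_nbhd_comp_eq _ wz) outer_nbhd_other_empty in_set0.
    by rewrite in_outer_nbhd ow' cwo eqxx.
  have oW := outer_closed_under_comp wW ow'.
  by have := deg_adj_le (u := w) _ cwo (deg_other_large_in_outer oW); rewrite eq_sym ow; lia.
have := deg_partition w dg; have := deg_small_in_outer wW; lia.
Qed.

Lemma outer_vertex_contra : False.
Proof.
have dgz := deg_g_large_in_comp (mono_comp_refl _ _ _ z).
have /card_gt0P[w] : 0 < deg g z by lia.
rewrite in_nbhd => /andP[wz /eqP czw]; rewrite eq_sym in wz.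
have dgw := deg_g_large_in_comp (comp_edge wz czw).
by have := deg_adj_le wz czw (leq_ltn_trans (leq_addl n m) dgw); lia.
Qed.

End Vertex.

Lemma large_outer_nbhd_contra : False.
Proof.
have [z zW] : exists z, z \in W by apply/set0Pn; rewrite -card_gt0; card_lia.
exact: outer_vertex_contra zW.
Qed.

End SmallComponent.

Lemma outer_nbhd_le_nm g x x' y : distinct3 x x' g -> #|outer_nbhd g x y| <= n + m.
Proof. by move=> dg; rewrite leqNgt; apply/negP; apply: large_outer_nbhd_contra dg. Qed.

Section LargeComponents.
Variable g : 'I_3.
Hypothesis comps_large : forall w, m < #|comp g w|.

Lemma comp_ge w : N - 2 * n <= #|comp g w|.
Proof.
have [x [x' dg]] := distinct3_others g.
have := outer_nbhd_partition w dg.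
have := outer_nbhd_le_n x (comps_large w); have := outer_nbhd_le_n x' (comps_large w).
lia.
Qed.

Section Pair.
Variables u v : 'I_N.
Hypothesis vu : v \notin comp g u.
Hypothesis pair_large : n < #|comp g u| + #|comp g v|.

Lemma outside_pair_colors z : z \notin comp g u -> z \notin comp g v -> c z u != c z v.
Proof.
move=> zu zv; apply/eqP => czuv.
(* Then [z] and [u] centre a double star with leaves [comp g u :|: comp g v]
   and [comp g z]. *)
have uz := mono_comp_notin_sym c_sym zu.
have /andP[zu' _] := comp_cross (mono_comp_notin_sym c_sym zu).
have disj_uv : [disjoint comp g u & comp g v].
  rewrite -setI_eq0; apply/eqP/setP => q; rewrite in_setI in_set0.
  by apply/negP => /andP[qu /(mono_comp_disjoint c_sym vu)]; rewrite qu.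
apply: no_star (double_star_of_sets (P := (comp g u :|: comp g v) :\ u) (Q := comp g z :\ z)
  zu' erefl _ _ _ _ _ _).
- apply/subsetP => p /setD1P[_ /setUP[] pc]; rewrite in_nbhd.
    by rewrite (color_to_comp zu pc) eqxx andbT; apply: contraNneq zu => <-.
  by rewrite (color_to_comp zv pc) czuv eqxx andbT; apply: contraNneq zv => <-.
- apply/subsetP => q /setD1P[_ qz]; rewrite in_nbhd (color_to_comp uz qz) c_sym eqxx andbT.
  by apply: contraNneq uz => <-.
- by rewrite setD11.
- by rewrite setD11.
- by have := comps_large z; rewrite (cardsD1 z (comp g z)) mono_comp_refl; card_lia.
- have -> : ((comp g u :|: comp g v) :\ u) :\: (comp g z :\ z) = (comp g u :|: comp g v) :\ u.
    apply/setDidPl; rewrite -setI_eq0; apply/eqP/setP => q.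
    rewrite !in_setI !in_setD1 in_setU in_set0.
    apply/negP => /andP[/andP[_ /orP[] qc] /andP[_ qz]].
      by move: (mono_comp_disjoint c_sym zu qz); rewrite qc.
    by move: (mono_comp_disjoint c_sym zv qz); rewrite qc.
  have := cardsD1 u (comp g u :|: comp g v); rewrite in_setU mono_comp_refl cardsU_disjoint //.
  card_lia.
Qed.

Lemma large_pair_contra : False.
Proof.
have /andP[_ xg] := comp_cross vu.
have uv := mono_comp_notin_sym c_sym vu.
have cover : [set: 'I_N] \subset outer_nbhd g (c u v) u :|: outer_nbhd g (c u v) v.
  apply/subsetP => z _; rewrite in_setU !in_outer_nbhd.
  have [zu|zu] := boolP (z \in comp g u).
    by rewrite (mono_comp_disjoint c_sym uv zu) (color_to_comp vu zu) (c_sym v) eqxx orbT.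
  have [zv|zv] := boolP (z \in comp g v).
    by rewrite (color_to_comp uv zv) eqxx.
  have /andP[_ zug] := comp_cross (mono_comp_notin_sym c_sym zu).
  have /andP[_ zvg] := comp_cross (mono_comp_notin_sym c_sym zv).
  have d3 : distinct3 (c z u) (c z v) g by rewrite /distinct3 outside_pair_colors // zug zvg.
  case/or3P: (distinct3_cover (c u v) d3) => /eqP e; rewrite e ?(c_sym u) ?(c_sym v) ?eqxx ?orbT //.
  by rewrite e eqxx in xg.
have := subset_leq_card cover; rewrite cardsT card_ord cardsU.
have := outer_nbhd_le_n (c u v) (comps_large u); have := outer_nbhd_le_n (c u v) (comps_large v).
card_lia.
Qed.

End Pair.

Lemma comp_pair_le u v : v \notin comp g u -> #|comp g u| + #|comp g v| <= n.
Proof. by move=> vu; rewrite leqNgt; apply/negP; apply: large_pair_contra vu. Qed.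

Lemma odd_two_comps_contra a b : 2 * N + 1 = 5 * n -> b \notin comp g a -> False.
Proof.
(* Every component besides a largest one has exactly [l = n/2] vertices, so [l]
   divides the size [4 l + 1] or [4 l + 2] of their union. *)
move=> Nodd ba; set l := n %/ 2.
pose u0 := [arg max_(u > a) #|comp g u|].
have u0_max v : #|comp g v| <= #|comp g u0| by rewrite /u0; case: arg_maxnP => // u _; apply.
have [v0 v0u0] : exists v0, v0 \notin comp g u0.
  have [au0|] := boolP (a \in comp g u0); last by exists a.
  by exists b; apply: contra ba => bu0; rewrite (mono_comp_eq c_sym au0).
have others v : v \notin comp g u0 -> #|comp g v| = l.
  move=> vu0; have := comp_pair_le vu0; have := u0_max v; have := comp_ge v; lia.
have /dvdn_sub/(_ (dvdn_mull 4 (dvdnn l))) : l %| #|~: comp g u0|.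
  apply: (dvdn_card_mono_comps c_sym (S := setT) (g := g)) => z; rewrite in_setC => zu0.
    by apply/subsetP => q qz; rewrite in_setC (mono_comp_disjoint c_sym zu0 qz).
  exact: others.
have := cardsC (comp g u0); rewrite card_ord => cardC.
have := comp_pair_le v0u0; have := others v0 v0u0; have := comp_ge u0 => low low' pair.
have -> : #|~: comp g u0| - 4 * l = (#|~: comp g u0| - 4 * l).-1.+1 by lia.
move/dvdn_leq => /(_ isT); lia.
Qed.

Lemma two_comps_contra a b : b \notin comp g a ->
  2 * N = 5 * n + 2 \/ 2 * N + 1 = 5 * n -> False.
Proof.
move=> ba [Neven | Nodd]; last exact: odd_two_comps_contra Nodd ba.
by have := comp_pair_le ba; have := comp_ge a; have := comp_ge b; lia.
Qed.

End LargeComponents.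
End LargeOrder.

Lemma star_free_gallai_coloring_contra :
  6 * m + 7 <= n -> 2 * N = 5 * n + 2 \/ 2 * N + 1 = 5 * n -> False.
Proof.
move=> n_large N_eq; have N_large : 5 * n <= 2 * N + 1 by lia.
have [|g [a [b [_ _ ba]]]] := gallai_mono_disconnected c_sym no_rainbow (S := setT).
  by rewrite cardsT card_ord; lia.
case: (boolP [exists y, #|comp g y| <= m]) => [/existsP[y small] | /existsPn large].
  have [x [x' dg]] := distinct3_others g.
  have dg' : distinct3 x' x g by move: dg; rewrite /distinct3 eq_sym => /and3P[-> -> ->].
  have := outer_nbhd_partition y dg.
  have := outer_nbhd_le_nm n_large N_large y dg; have := outer_nbhd_le_nm n_large N_large y dg'.
  lia.
have comps_large w : m < #|comp g w| by rewrite ltnNge large.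
exact: two_comps_contra n_large N_large g comps_large a b ba N_eq.
Qed.

End UpperBound.

(* The two 5-cycles of [K_5] on blocks [0..4], coloured [ord0] (cyclic distance 1)
   and [1] (distance 2); [ord_max] colours the edges inside a block. *)
Definition pentagon (a b : nat) : 'I_3 :=
  if a == b then ord_max
  else if (a + 5 - b) %% 5 \in [:: 1; 4] then ord0 else Ordinal (isT : 1 < 3).

Lemma pentagon_sym a b : a <= 4 -> b <= 4 -> pentagon a b = pentagon b a.
Proof. by case: a => [|[|[|[|[|?]]]]] //; case: b => [|[|[|[|[|?]]]]]. Qed.

Lemma pentagon_offdiag a b : a <= 4 -> b <= 4 -> a != b -> pentagon a b != ord_max.
Proof. by case: a => [|[|[|[|[|?]]]]] //; case: b => [|[|[|[|[|?]]]]]. Qed.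

Lemma pentagon_fibre a col : a <= 4 -> col != ord_max ->
  exists j1 j2, [/\ j1 != j2, j1 <= 4, j2 <= 4 &
    forall b, b <= 4 -> pentagon a b = col -> b = j1 \/ b = j2].
Proof.
move=> a4 colF; pose d := if col == ord0 then 1 else 2.
exists ((a + d) %% 5), ((a + 5 - d) %% 5); split; try by rewrite -ltnS ltn_mod.
  by rewrite /d; case: a a4 => [|[|[|[|[|?]]]]] //; case: (col == ord0).
move=> b b4 colE; move: colF; rewrite /d -{}colE.
case: a a4 => [|[|[|[|[|?]]]]] //; case: b b4 => [|[|[|[|[|?]]]]] //.
all: by rewrite /pentagon /=; auto.
Qed.

Lemma card_interval_le N (A : {set 'I_N}) lo k :
  (forall z : 'I_N, z \in A -> lo <= z < lo + k) -> #|A| <= k.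
Proof.
move=> inA; rewrite cardE -(size_map val) -(size_iota lo k).
apply: uniq_leq_size; first by rewrite (map_inj_uniq val_inj) enum_uniq.
move=> i /mapP[z]; rewrite mem_enum => /inA zA ->.
by rewrite mem_iota.
Qed.

Section LowerBound.
Variables (n N : nat).
Hypothesis n_gt1 : 1 < n.
Hypothesis N_small : N <= 5 * (n %/ 2) + odd n.
Local Notation h := (n %/ 2).

(* Blocks [0..3] have [n/2] vertices; block [4] takes the rest, at most
   [n/2 + odd n] of them. *)
Definition block (x : 'I_N) := minn (x %/ h) 4.
Definition blow_up (x y : 'I_N) := pentagon (block x) (block y).

Lemma block_le x : block x <= 4.
Proof. exact: geq_minr. Qed.

Lemma blow_up_sym : edge_coloring blow_up.
Proof. by move=> x y; rewrite /blow_up pentagon_sym ?block_le. Qed.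

Lemma blow_up_no_rainbow : ~ has_rainbow_K3 blow_up.
Proof.
case=> x [y [z [_ _ _ [e1 e2 e3]]]]; move: e1 e2 e3; rewrite /blow_up.
have [[xb yb] zb] := (block_le x, block_le y, block_le z).
have [-> _ _ /negP[] // | xy] := eqVneq (block x) (block y).
have [-> _ /negP[] // | yz] := eqVneq (block y) (block z).
have [-> /negP[] | xz] := eqVneq (block x) (block z); first by rewrite pentagon_sym.
move=> e1 e2 e3.
have d3 : distinct3 (pentagon (block x) (block y)) (pentagon (block y) (block z)) ord_max.
  by rewrite /distinct3 e1 !pentagon_offdiag.
case/or3P: (distinct3_cover (pentagon (block x) (block z)) d3) => /eqP e.
- by rewrite e eqxx in e2.
- by rewrite e eqxx in e3.
- by move: (pentagon_offdiag xb zb xz); rewrite e eqxx.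
Qed.

Lemma block_card j : #|[set z | block z == j]| <= h + ((j == 4) && odd n).
Proof.
have h_gt0 : 0 < h by lia.
have [j4 | j4 | ->] := ltngtP j 4.
- apply: (card_interval_le (lo := j * h)) => z; rewrite inE /block => /eqP zj.
  have zh : z %/ h = j by move: zj; rewrite /minn; case: ltnP => //; lia.
  have := divn_eq z h; have := ltn_pmod z h_gt0; rewrite zh; lia.
- rewrite (_ : [set z | _] = set0) ?cards0 //; apply/setP => z; rewrite !inE.
  by apply/negP => /eqP zj; move: (block_le z); rewrite zj leqNgt j4.
- apply: (card_interval_le (lo := 4 * h)) => z; rewrite inE /block => /eqP zj.
  have : 4 <= z %/ h by move: zj; rewrite /minn; case: ltnP => //; lia.
  rewrite leq_divRL // => z4; have := ltn_ord z; lia.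
Qed.

Lemma blow_up_deg col u : deg blow_up col u <= n.
Proof.
have [->|colF] := eqVneq col ord_max.
  have sub : nbhd blow_up ord_max u \subset [set z | block z == block u].
    apply/subsetP => z; rewrite in_nbhd inE => /andP[_]; apply: contraTT => zu.
    by apply: pentagon_offdiag; rewrite ?block_le // eq_sym.
  apply: leq_trans (subset_leq_card sub) (leq_trans (block_card _) _).
  by case: (_ == 4); lia.
have [j1 [j2 [j12 j1_4 j2_4 fibre]]] := pentagon_fibre (block_le u) colF.
have sub : nbhd blow_up col u \subset [set z | block z == j1] :|: [set z | block z == j2].
  apply/subsetP => z; rewrite in_nbhd !inE => /andP[_ /eqP /(fibre _ (block_le z))].
  by case=> ->; rewrite eqxx ?orbT.
apply: leq_trans (subset_leq_card sub) _; rewrite cardsU.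
have := block_card j1; have := block_card j2.
have : ((j1 == 4) && odd n) + ((j2 == 4) && odd n) <= odd n.
  by move: j12; case: (j1 =P 4) => [->|_]; case: (j2 =P 4) => [->|_] //=; case: (odd n).
lia.
Qed.

Lemma blow_up_no_star m : ~ has_mono_double_star n m blow_up.
Proof. by case/deg_of_double_star => col [u]; rewrite ltnNge blow_up_deg. Qed.

Lemma not_gr_property_small m : ~ gr_property 3 n m N.
Proof. by move/(_ blow_up blow_up_sym) => [/blow_up_no_rainbow | /blow_up_no_star]. Qed.

End LowerBound.

Lemma gr_property_upper n m N : 6 * m + 7 <= n ->
  2 * N = 5 * n + 2 \/ 2 * N + 1 = 5 * n -> gr_property 3 n m N.
Proof.
move=> n_large N_eq c c_sym.
have [rainbow | no_rainbow] := classic (has_rainbow_K3 c); [by left | right].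
apply: NNPP => no_star.
exact: star_free_gallai_coloring_contra c_sym no_rainbow no_star n_large N_eq.
Qed.

Theorem proposition1 (n m : nat) (hm : 1 <= m) (hn : 6 * m + 7 <= n) :
  is_gr_K3_double_star 3 n m
    (if ~~ odd n then 5 * (n %/ 2) + 1 else 5 * ((n - 1) %/ 2) + 2).
Proof.
set G := (if ~~ odd n then _ else _).
have G_eq : 2 * G = 5 * n + 2 \/ 2 * G + 1 = 5 * n by rewrite /G; case: ifP; lia.
split; first exact: gr_property_upper hn G_eq.
move=> N grN; rewrite leqNgt; apply/negP => NG.
by apply: (not_gr_property_small _ _ grN); rewrite /G in NG; case: ifP NG; lia.
Qed.
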